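(* In the finite element setting described in the context (linear hexahedral elements for 3D elasticity, $m=24$), let $\beta\ge 0$ and, for each element $e$ with mass $m_e>0$, $$M_e=I_3\otimes \mathrm{M}_e,\quad \mathrm{M}_e=\frac{m_e}{8}I_8,\qquad E_e=I_3\otimes \mathrm{E}_e,\quad \mathrm{E}_e=\frac{\beta m_e}{56}\bigl(8I_8-\mathbf{e}\mathbf{e}^T\bigr),$$ where $\mathbf{e}\in\mathbb{R}^8$ is the vector of all ones (so $\mathrm{E}_e$ has diagonal entries $7\beta m_e/56$ and off-diagonal entries $-\beta m_e/56$), and $\overline{M}_e=M_e+E_e$. Let $M=\sum_eL_e^TM_eL_e$ and $\overline{M}=\sum_eL_e^T\overline{M}_eL_e$. Then for all $i=1,\dots,n$, $$1\le\frac{\omega_i}{\overline{\omega}_i}\le\sqrt{1+\tfrac{8}{7}\beta},\qquad \frac{\kappa(\overline{M})}{\kappa(M)}\le 1+\tfrac{8}{7}\beta,$$ where $\omega_i=\sqrt{\lambda_i(K,M)}$, $\overline{\omega}_i=\sqrt{\lambda_i(K,\overline{M})}$.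
   Context: Finite element setting: there are $n$ global degrees of freedom and $N$ elements, each with $m$ local degrees of freedom. For each element $e$, $L_e\in\mathbb{R}^{m\times n}$ satisfies $L_e^T=[\mathbf{e}_{i_1},\dots,\mathbf{e}_{i_m}]$ for distinct indices $i_1,\dots,i_m$ (columns of $I_n$), and every global index appears for at least one element. Element matrices are assembled as $A=\sum_{e=1}^N L_e^TA_eL_e$. The global stiffness matrix is $K=\sum_e L_e^TK_eL_e$ with each $K_e$ symmetric positive semidefinite, and $K$ is assumed symmetric positive definite. Generalized eigenvalues of a pair are numbered in ascending order. For a symmetric positive definite matrix $A$, $\kappa(A)=\lambda_{\max}(A)/\lambda_{\min}(A)$. $\otimes$ is the Kronecker product. *)

From HB Require Import structures.
From mathcomp Require Import all_boot all_order all_algebra.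
From mathcomp Require Import mxtens.
Set Implicit Arguments. Unset Strict Implicit. Unset Printing Implicit Defensive.
Import Order.TTheory GRing.Theory Num.Theory.
Local Open Scope ring_scope.

Definition is_sym (R : ringType) n (A : 'M[R]_n) : Prop := A^T = A.

Definition is_psd (R : realFieldType) n (A : 'M[R]_n) : Prop :=
  is_sym A /\ forall x : 'cV[R]_n, 0 <= (x^T *m A *m x) 0 0.

Definition is_spd (R : realFieldType) n (A : 'M[R]_n) : Prop :=
  is_sym A /\ forall x : 'cV[R]_n, x != 0 -> 0 < (x^T *m A *m x) 0 0.

Definition locmx (R : ringType) m n (idx : 'I_m -> 'I_n) : 'M[R]_(m, n) :=
  \matrix_(a, j) (idx a == j)%:R.

Definition assemble (R : ringType) N m n (idx : 'I_N -> 'I_m -> 'I_n)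
  (A : 'I_N -> 'M[R]_m) : 'M[R]_n :=
  \sum_(e < N) (locmx R (idx e))^T *m A e *m locmx R (idx e).

Definition pencil_poly (R : comRingType) n (A B : 'M[R]_n) : {poly R} :=
  \det (\matrix_(i, j) (B i j *: 'X - (A i j)%:P)).

(* s is the list of generalized eigenvalues of the pair (A, B), counted with
   multiplicity (roots of det(A - x B)), numbered in ascending order:
   lambda_{i+1}(A,B) = s`_i. *)
Definition gen_eigs (R : realFieldType) n (A B : 'M[R]_n) (s : seq R) : Prop :=
  [/\ size s = n, sorted <=%R s &
      pencil_poly A B = \det B *: \prod_(x <- s) ('X - x%:P)].

Definition eigs (R : realFieldType) n (A : 'M[R]_n) (s : seq R) : Prop :=
  gen_eigs A 1%:M s.

Definition kappa_of (R : realFieldType) (s : seq R) : R :=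
  s`_(size s).-1 / s`_0.

Definition ones8 (R : ringType) : 'cV[R]_8 := const_mx 1.

Definition Mloc (R : fieldType) (me : R) : 'M[R]_(3 * 8) :=
  (1%:M : 'M[R]_3) *t ((me / 8) *: (1%:M : 'M[R]_8)).

Definition Eloc (R : fieldType) (beta me : R) : 'M[R]_(3 * 8) :=
  (1%:M : 'M[R]_3) *t ((beta * me / 56) *: (8 *: (1%:M : 'M[R]_8) - ones8 R *m (ones8 R)^T)).

(** Every generalized eigenvalue statement here follows from a Courant-Fischer
    comparison: if [A2 <= a A1] and [B1 <= b B2] in the Loewner order then
    [lambda_i(A2, B2) <= a b lambda_i(A1, B1)]. It is proved by simultaneously
    diagonalizing each Hermitian pencil over [R[i]] and choosing a nonzero vector
    that lies in the span of the first [i+1] eigenvectors of one pencil and of the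
    last [n-i] eigenvectors of the other. The element matrices satisfy
    [0 <= E_e <= 8/7 beta M_e], since [e e^T <= 8 I_8] by Cauchy-Schwarz; after
    assembly [M <= Mb <= (1 + 8/7 beta) M], which bounds both eigenvalue ratios and
    the condition numbers. *)

From HB Require Import structures.
From mathcomp Require Import all_boot all_order all_algebra.
From mathcomp Require Import mxtens.
From mathcomp Require Import perm sesquilinear spectral ring complex.
Import Order.TTheory GRing.Theory Num.Theory.
Local Open Scope ring_scope.
Set Implicit Arguments. Unset Strict Implicit. Unset Printing Implicit Defensive.

Section QuadraticForm.
Variable R : realFieldType.

Definition qform n (y : 'cV[R]_n) (P : 'M[R]_n) : R := (y^T *m P *m y) 0 0.

Lemma qform0 n (P : 'M[R]_n) : qform 0 P = 0.
Proof. by rewrite /qform mulmx0 mxE. Qed.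

Lemma qformD n (y : 'cV[R]_n) A B : qform y (A + B) = qform y A + qform y B.
Proof. by rewrite /qform mulmxDr mulmxDl mxE. Qed.

Lemma qformZ n (y : 'cV[R]_n) a A : qform y (a *: A) = a * qform y A.
Proof. by rewrite /qform -scalemxAr -scalemxAl mxE. Qed.

Lemma qformB n (y : 'cV[R]_n) A B : qform y (A - B) = qform y A - qform y B.
Proof. by rewrite qformD -scaleN1r qformZ mulN1r. Qed.

Lemma qform1 n (y : 'cV[R]_n) : qform y 1%:M = \sum_i y i 0 ^+ 2.
Proof. by rewrite /qform mulmx1 mxE; apply: eq_bigr => i _; rewrite mxE expr2. Qed.

Lemma qform_gram_ge0 m n (y : 'cV[R]_n) (X : 'M[R]_(m, n)) : 0 <= qform y (X^T *m X).
Proof.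
rewrite /qform mulmxA -trmx_mul -mulmxA mxE; apply: sumr_ge0 => i _.
by rewrite mxE -expr2 sqr_ge0.
Qed.

Lemma qform1_ge0 n (y : 'cV[R]_n) : 0 <= qform y 1%:M.
Proof. by rewrite qform1 sumr_ge0 // => i _; exact: sqr_ge0. Qed.

Lemma qform1_gt0 n (y : 'cV[R]_n) j : y j 0 != 0 -> 0 < qform y 1%:M.
Proof.
move=> yj; rewrite qform1 (bigD1 j) //=; apply: ltr_pwDl.
  by rewrite lt0r sqrf_eq0 yj sqr_ge0.
by apply: sumr_ge0 => i _; rewrite sqr_ge0.
Qed.

Lemma cV_neq0 n (y : 'cV[R]_n) : y != 0 -> exists j, y j 0 != 0.
Proof.
move=> y0; apply/existsP; apply: contraNT y0 => /existsPn y0.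
by apply/eqP/matrixP => j k; rewrite ord1 !mxE; apply/eqP/negbNE/y0.
Qed.

Lemma spd1 n : is_spd (1%:M : 'M[R]_n).
Proof. by split=> [|y /cV_neq0 [j /qform1_gt0]]; first exact: trmx1. Qed.

Lemma spd_qform_ge n (A B : 'M[R]_n) : is_spd A -> B^T = B ->
  (forall y, qform y A <= qform y B) -> is_spd B.
Proof. by case=> _ pA sB le; split=> // y /pA /lt_le_trans; apply; exact: le. Qed.

Section Assembly.
Variables (N m n : nat) (idx : 'I_N -> 'I_m -> 'I_n).

Lemma qform_assemble (A : 'I_N -> 'M[R]_m) y :
  qform y (assemble idx A) = \sum_e qform (locmx R (idx e) *m y) (A e).
Proof.
rewrite /assemble /qform mulmx_sumr mulmx_suml summxE; apply: eq_bigr => e _.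
by rewrite trmx_mul !mulmxA.
Qed.

Lemma assemble_sym (A : 'I_N -> 'M[R]_m) :
  (forall e, (A e)^T = A e) -> (assemble idx A)^T = assemble idx A.
Proof.
move=> sA; rewrite /assemble raddf_sum /=; apply: eq_bigr => e _.
by rewrite !trmx_mul trmxK sA mulmxA.
Qed.

Lemma assemble_qform_le (A B : 'I_N -> 'M[R]_m) (c : R) :
  (forall e z, qform z (A e) <= c * qform z (B e)) ->
  forall y, qform y (assemble idx A) <= c * qform y (assemble idx B).
Proof.
by move=> le y; rewrite !qform_assemble mulr_sumr; apply: ler_sum => e _.
Qed.

Lemma assemble_scalar_spd (A : 'I_N -> 'M[R]_m) (c : 'I_N -> R) :
  (forall e, A e = c e *: 1%:M) -> (forall e, 0 < c e) ->
  (forall j, exists e a, idx e a = j) -> is_spd (assemble idx A).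
Proof.
move=> eA c0 cover; split.
  by apply: assemble_sym => e; rewrite eA linearZ /= trmx1.
move=> y /cV_neq0 [j yj]; have [e [a ea]] := cover j.
change (0 < qform y (assemble idx A)).
rewrite qform_assemble (bigD1 e) //=; apply: ltr_pwDl.
  rewrite eA qformZ mulr_gt0 // (qform1_gt0 (j := a)) // mxE (bigD1 j) //= big1.
    by rewrite mxE ea eqxx mul1r addr0.
  by move=> k kj; rewrite mxE ea eq_sym (negbTE kj) mul0r.
by apply: sumr_ge0 => i _; rewrite eA qformZ mulr_ge0 ?qform1_ge0 ?ltW.
Qed.

End Assembly.

End QuadraticForm.

Section HermitianPencil.
Variable C : numClosedFieldType.
Local Open Scope sesquilinear_scope.

Definition hform n (x : 'cV[C]_n) (A : 'M[C]_n) : C := (x^t* *m A *m x) 0 0.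

Lemma trmxC_mul m n p (A : 'M[C]_(m, n)) (B : 'M[C]_(n, p)) :
  (A *m B)^t* = B^t* *m A^t*.
Proof. by rewrite trmx_mul map_mxM. Qed.

Lemma trmxCD m n (A B : 'M[C]_(m, n)) : (A + B)^t* = A^t* + B^t*.
Proof. by rewrite linearD map_mxD. Qed.

Lemma trmxCZ m n (c : C) (A : 'M[C]_(m, n)) : (c *: A)^t* = c^* *: A^t*.
Proof. by rewrite linearZ map_mxZ. Qed.

Lemma hform_congr_diag n (T : 'M[C]_n) (d : 'rV[C]_n) x :
  hform x (T^t* *m diag_mx d *m T) = \sum_j d 0 j * `|(T *m x) j 0| ^+ 2.
Proof.
rewrite /hform.
have -> : x^t* *m (T^t* *m diag_mx d *m T) *m x = (T *m x)^t* *m diag_mx d *m (T *m x).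
  by rewrite trmxC_mul !mulmxA.
rewrite mul_mx_diag mxE.
by apply: eq_bigr => j _; rewrite !mxE normCKC mulrCA mulrA.
Qed.

Lemma hform_gram n (T : 'M[C]_n) x :
  hform x (T^t* *m T) = \sum_j `|(T *m x) j 0| ^+ 2.
Proof.
rewrite -[T^t*]mulmx1 -diag_const_mx hform_congr_diag.
by apply: eq_bigr => j _; rewrite mxE mul1r.
Qed.

Lemma hermitian_spectral_decomp n (A : 'M[C]_n) : A^t* = A ->
  A = (spectralmx A)^t* *m diag_mx (spectral_diag A) *m spectralmx A.
Proof.
move=> hA; rewrite -invmx_unitary ?spectral_unitarymx //.
apply/orthomx_spectralP/hermitian_normalmx/is_hermitianmxP.
by rewrite expr0 scale1r hA.
Qed.

Lemma congr_diag_pos_gt0 n (T : 'M[C]_n) (d : 'rV[C]_n) k : T \in unitmx ->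
  (forall x, x != 0 -> 0 < hform x (T^t* *m diag_mx d *m T)) -> 0 < d 0 k.
Proof.
move=> uT pA; pose x : 'cV[C]_n := invmx T *m delta_mx k 0.
have Tx : T *m x = delta_mx k 0 by rewrite mulKVmx.
have x0 : x != 0.
  apply: contra_neq (oner_neq0 C) => x0.
  by move/matrixP/(_ k 0): Tx; rewrite x0 mulmx0 !mxE !eqxx.
have := pA x x0; rewrite hform_congr_diag Tx (bigD1 k) //= big1 ?addr0.
  by rewrite mxE !eqxx normr1 expr1n mulr1.
by move=> j jk; rewrite mxE (negbTE jk) normr0 expr0n mulr0.
Qed.

Lemma pos_hermitian_gram n (B : 'M[C]_n) : B^t* = B ->
  (forall x, x != 0 -> 0 < hform x B) ->
  exists2 S : 'M[C]_n, S \in unitmx & B = S^t* *m S.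
Proof.
move=> hB pB; have eB := hermitian_spectral_decomp hB.
set U := spectralmx B in eB; set d := spectral_diag B in eB.
have d_gt0 j : 0 < d 0 j.
  by apply: (congr_diag_pos_gt0 _ (spectral_unit B)); rewrite -eB.
pose r : 'rV[C]_n := \row_j sqrtC (d 0 j).
have r_real : (diag_mx r)^t* = diag_mx r.
  apply/matrixP => i j; rewrite !mxE eq_sym.
  case: eqP => [->|]; rewrite ?mulr0n ?conjC0 // !mulr1n.
  by rewrite conj_Creal ?ger0_real ?sqrtC_ge0 ?ltW.
have r2 : diag_mx r *m diag_mx r = diag_mx d.
  apply/matrixP => i j; rewrite mul_diag_mx !mxE.
  by case: eqP => [->|_]; rewrite ?mulr0n ?mulr0 // !mulr1n -expr2 sqrtCK.
exists (diag_mx r *m U).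
  rewrite unitmx_mul spectral_unit andbT unitmxE det_diag unitfE.
  by apply/prodf_neq0 => i _; rewrite mxE sqrtC_eq0 gt_eqF.
by rewrite trmxC_mul r_real -mulmxA (mulmxA (diag_mx r)) r2 mulmxA.
Qed.

Lemma hermitian_pencil_simdiag n (A B : 'M[C]_n) : A^t* = A -> B^t* = B ->
  (forall x, x != 0 -> 0 < hform x B) ->
  exists T d, [/\ T \in unitmx, A = T^t* *m diag_mx (d : 'rV[C]_n) *m T & B = T^t* *m T].
Proof.
move=> hA hB pB; have [S uS eB] := pos_hermitian_gram hB pB.
pose A' := (invmx S)^t* *m A *m invmx S.
have hA' : A'^t* = A' by rewrite /A' !trmxC_mul trmxCK hA mulmxA.
have eA' := hermitian_spectral_decomp hA'.
set W := spectralmx A' in eA'.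
have WW : W^t* *m W = 1%:M.
  by rewrite -invmx_unitary ?spectral_unitarymx // mulVmx ?spectral_unit.
exists (W *m S), (spectral_diag A'); split.
- by rewrite unitmx_mul spectral_unit.
- have -> : A = S^t* *m A' *m S.
    by rewrite /A' !mulmxA -trmxC_mul mulVmx // trmx1 map_mx1 mul1mx mulmxKV.
  by rewrite {1}eA' trmxC_mul !mulmxA.
- by rewrite trmxC_mul -mulmxA (mulmxA (W^t*)) WW mul1mx.
Qed.

Lemma pencil_poly_congr_diag n (T : 'M[C]_n) (d : 'rV[C]_n) :
  pencil_poly (T^t* *m diag_mx d *m T) (T^t* *m T) =
  \det (T^t* *m T) *: \prod_j ('X - (d 0 j)%:P).
Proof.
rewrite /pencil_poly.
have -> : \matrix_(i, j) ((T^t* *m T) i j *: 'X - ((T^t* *m diag_mx d *m T) i j)%:P)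
   = map_mx polyC (T^t*) *m diag_mx (\row_j ('X - (d 0 j)%:P)) *m map_mx polyC T.
  apply/matrixP => i j; rewrite !mul_mx_diag !mxE scaler_suml rmorph_sum -sumrB.
  by apply: eq_bigr => k _; rewrite !mxE -!mul_polyC !rmorphM /=; ring.
rewrite !det_mulmx !det_map_mx det_diag -mul_polyC rmorphM /=.
by under eq_bigr do rewrite mxE; ring.
Qed.

Lemma pencil_poly_roots_simdiag n (A B : 'M[C]_n) (s : seq C) :
  A^t* = A -> B^t* = B -> (forall x, x != 0 -> 0 < hform x B) ->
  pencil_poly A B = \det B *: \prod_(x <- s) ('X - x%:P) ->
  exists2 T : 'M[C]_n, T \in unitmx &
    A = T^t* *m diag_mx (\row_j s`_j) *m T /\ B = T^t* *m T.
Proof.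
move=> hA hB pB eP.
have [T [d [uT eA eB]]] := hermitian_pencil_simdiag hA hB pB.
have dB : \det B != 0 by rewrite -unitfE -unitmxE eB unitmx_mul map_unitmx unitmx_tr uT.
have : perm_eq s [tuple d 0 j | j < n].
  apply: prod_XsubC_eq; apply: (scalerI dB).
  rewrite -eP {1}eA {1}eB pencil_poly_congr_diag -eB big_tuple.
  by congr (_ *: _); apply: eq_bigr => j _; rewrite tnth_mktuple.
case/tuple_permP => p ep.
have es : \row_j s`_j = \row_k d 0 (p k) :> 'rV[C]_n.
  by apply/rowP => k; rewrite !mxE ep (nth_mktuple _ _ k) tnth_mktuple.
exists (row_perm p T); first by rewrite row_permE unitmx_mul unitmx_perm.
rewrite es eA eB !mul_mx_diag; split; apply/matrixP => i j; rewrite !mxE;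
  by rewrite [LHS](reindex_inj (@perm_inj _ p)); apply: eq_bigr => k _; rewrite !mxE.
Qed.

Lemma exists_vec_split_kernel n (T1 T2 : 'M[C]_n) (i : 'I_n) :
  exists2 x : 'cV[C]_n, x != 0 &
    (forall k : 'I_n, (i < k)%N -> (T1 *m x) k 0 = 0) /\
    (forall k : 'I_n, (k < i)%N -> (T2 *m x) k 0 = 0).
Proof.
pose S : 'M[C]_n := \matrix_(k, j)
  (if (i < k)%N then T1 k j else if (k < i)%N then T2 k j else 0).
have /det0P [v v0 vS] : \det S^T == 0.
  by rewrite det_tr (expand_det_row S i) big1 // => j _; rewrite mxE ltnn mul0r.
have Sv k : (S *m v^T) k 0 = 0 by rewrite -[S]trmxK -trmx_mul vS !mxE.
exists v^T; first by rewrite trmx_eq0.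
split=> k ik; rewrite -(Sv k) !mxE; apply: eq_bigr => j _; rewrite [S k j]mxE ik //.
by rewrite ltnNge (ltnW ik).
Qed.

Section SortedDiag.
Variables (n : nat) (T : 'M[C]_n) (s : seq C) (i : 'I_n) (x : 'cV[C]_n).
Hypotheses (size_s : size s = n) (sorted_s : sorted <=%R s).

Let nth_le (j k : 'I_n) : (j <= k)%N -> s`_j <= s`_k.
Proof. by move=> jk; apply: (sorted_leq_nth le_trans lexx); rewrite ?inE ?size_s. Qed.

Lemma hform_congr_sorted_le :
  (forall k : 'I_n, (i < k)%N -> (T *m x) k 0 = 0) ->
  hform x (T^t* *m diag_mx (\row_j s`_j) *m T) <= s`_i * hform x (T^t* *m T).
Proof.
move=> Tx0; rewrite hform_congr_diag hform_gram mulr_sumr; apply: ler_sum => k _.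
rewrite [X in X * _ <= _]mxE; case: (ltnP i k) => [/Tx0 ->|ki].
  by rewrite normr0 expr0n !mulr0.
by rewrite ler_wpM2r ?exprn_ge0 ?nth_le.
Qed.

Lemma hform_congr_sorted_ge :
  (forall k : 'I_n, (k < i)%N -> (T *m x) k 0 = 0) ->
  s`_i * hform x (T^t* *m T) <= hform x (T^t* *m diag_mx (\row_j s`_j) *m T).
Proof.
move=> Tx0; rewrite hform_congr_diag hform_gram mulr_sumr; apply: ler_sum => k _.
rewrite [X in _ <= X * _]mxE; case: (ltnP k i) => [/Tx0 ->|ik].
  by rewrite normr0 expr0n !mulr0.
by rewrite ler_wpM2r ?exprn_ge0 ?nth_le.
Qed.

End SortedDiag.

Lemma congr_diag_sorted_compare n (T1 T2 : 'M[C]_n) (s1 s2 : seq C) (a b : C) (i : 'I_n) :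
  size s1 = n -> size s2 = n -> sorted <=%R s1 -> sorted <=%R s2 ->
  0 <= a -> 0 <= b -> 0 <= s1`_i ->
  (forall x, hform x (T2^t* *m diag_mx (\row_j s2`_j) *m T2)
             <= a * hform x (T1^t* *m diag_mx (\row_j s1`_j) *m T1)) ->
  (forall x, hform x (T1^t* *m T1) <= b * hform x (T2^t* *m T2)) ->
  (forall x, x != 0 -> 0 < hform x (T2^t* *m T2)) ->
  s2`_i <= a * b * s1`_i.
Proof.
move=> sz1 sz2 so1 so2 a0 b0 s10 leA leB pB2.
have [x x0 [T1x T2x]] := exists_vec_split_kernel T1 T2 i.
rewrite -(ler_pM2r (pB2 x x0)).
apply: le_trans (hform_congr_sorted_ge sz2 so2 T2x) _.
apply: le_trans (leA x) _; rewrite -!mulrA ler_wpM2l //.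
apply: le_trans (hform_congr_sorted_le sz1 so1 T1x) _.
by rewrite mulrCA ler_wpM2l.
Qed.

End HermitianPencil.

Section RealPencil.
Variable R : rcfType.
Local Notation C := (R[i]).
Local Notation toC := (real_complex R).
Local Open Scope sesquilinear_scope.

Lemma trmxC_real m n (A : 'M[R]_(m, n)) : (map_mx toC A)^t* = map_mx toC A^T.
Proof.
by apply/matrixP => i j; rewrite !mxE; apply/conj_Creal/complex_realP; exists (A j i).
Qed.

Lemma re_im_decomp n (x : 'cV[C]_n) :
  x = map_mx toC (map_mx (@complex.Re R) x) + 'i *: map_mx toC (map_mx (@complex.Im R) x).
Proof. by apply/matrixP => i j; rewrite !mxE -complexiE {1}[x i j]complexE. Qed.

Lemma hform_real n (P : 'M[R]_n) (x : 'cV[C]_n) : P^T = P ->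
  hform x (map_mx toC P) =
  toC (qform (map_mx (@complex.Re R) x) P + qform (map_mx (@complex.Im R) x) P).
Proof.
move=> sP; set a := map_mx _ x; set b := map_mx _ x.
have sym : b^T *m P *m a = (a^T *m P *m b)^T by rewrite !trmx_mul trmxK sP mulmxA.
rewrite /hform {1 2}(re_im_decomp x) -/a -/b.
rewrite trmxCD trmxCZ conjCi !trmxC_real.
rewrite !(mulmxDl, mulmxDr) -!scalemxAl -!scalemxAr -!map_mxM.
have ii : - 'i * 'i = 1 :> C by rewrite mulNr -expr2 sqrCi opprK.
rewrite sym /qform !mxE rmorphD /= [- 'i * ('i * _)]mulrA ii.
ring.
Qed.

Lemma hermitian_real n (P : 'M[R]_n) : P^T = P -> (map_mx toC P)^t* = map_mx toC P.
Proof. by move=> sP; rewrite trmxC_real sP. Qed.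

Lemma hform_real_gt0 n (P : 'M[R]_n) : is_spd P ->
  forall x, x != 0 -> 0 < hform x (map_mx toC P).
Proof.
case=> sP pP x x0; rewrite hform_real // -(rmorph0 toC) ltcR.
set a := map_mx _ x; set b := map_mx _ x.
have ge0 y : 0 <= qform y P by have [->|/pP/ltW] := eqVneq y 0; rewrite ?qform0.
have [a0|/pP] := eqVneq a 0; last by move/ltr_pwDl; apply.
have [b0|/pP] := eqVneq b 0; last by move/ltr_pwDr; apply.
by case/eqP: x0; rewrite (re_im_decomp x) -/a -/b a0 b0 !(map_mx0 toC) scaler0 addr0.
Qed.

Lemma hform_real_le n (P Q : 'M[R]_n) (c : R) : P^T = P -> Q^T = Q ->
  (forall y, qform y P <= c * qform y Q) ->
  forall x, hform x (map_mx toC P) <= toC c * hform x (map_mx toC Q).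
Proof. by move=> sP sQ le x; rewrite !hform_real // -rmorphM lecR mulrDr lerD. Qed.

Lemma pencil_poly_real n (A B : 'M[R]_n) :
  pencil_poly (map_mx toC A) (map_mx toC B) = map_poly toC (pencil_poly A B).
Proof.
rewrite /pencil_poly -det_map_mx; congr (\det _); apply/matrixP => i j.
by rewrite !mxE rmorphB /= map_polyZ map_polyX map_polyC.
Qed.

Lemma nth_real_complex (s : seq R) k : (map toC s)`_k = toC s`_k.
Proof.
have [ks|ks] := ltnP k (size s); first by rewrite (nth_map 0).
by rewrite !nth_default ?size_map // rmorph0.
Qed.

Lemma row_nth_real_complex n (s : seq R) :
  \row_(j < n) (map toC s)`_j = \row_j toC s`_j.
Proof. by apply/rowP => j; rewrite !mxE nth_real_complex. Qed.

Lemma gen_eigs_simdiag n (A B : 'M[R]_n) (s : seq R) :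
  A^T = A -> is_spd B -> gen_eigs A B s ->
  exists2 T : 'M[C]_n, T \in unitmx &
    map_mx toC A = T^t* *m diag_mx (\row_j toC s`_j) *m T /\ map_mx toC B = T^t* *m T.
Proof.
move=> sA pB [_ _ eP].
have eP' : pencil_poly (map_mx toC A) (map_mx toC B)
    = \det (map_mx toC B) *: \prod_(x <- map toC s) ('X - x%:P).
  rewrite pencil_poly_real eP map_polyZ det_map_mx rmorph_prod big_map; congr (_ *: _).
  by apply: eq_bigr => x _; rewrite rmorphB /= map_polyX map_polyC.
have [T uT [eA eB]] := pencil_poly_roots_simdiag (hermitian_real sA)
  (hermitian_real pB.1) (hform_real_gt0 pB) eP'.
by exists T; rewrite // -row_nth_real_complex.
Qed.

Lemma gen_eigs_gt0 n (A B : 'M[R]_n) (s : seq R) (k : 'I_n) :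
  is_spd A -> is_spd B -> gen_eigs A B s -> 0 < s`_k.
Proof.
move=> pA pB ge; have [T uT [eA _]] := gen_eigs_simdiag pA.1 pB ge.
have := @congr_diag_pos_gt0 _ _ T (\row_j toC s`_j) k uT.
by rewrite -eA mxE -(rmorph0 toC) ltcR; apply; exact: hform_real_gt0.
Qed.

Lemma gen_eigs_compare n (A1 B1 A2 B2 : 'M[R]_n) (s1 s2 : seq R) (a b : R) (i : 'I_n) :
  is_spd A1 -> A2^T = A2 -> is_spd B1 -> is_spd B2 ->
  gen_eigs A1 B1 s1 -> gen_eigs A2 B2 s2 -> 0 <= a -> 0 <= b ->
  (forall y, qform y A2 <= a * qform y A1) ->
  (forall y, qform y B1 <= b * qform y B2) ->
  s2`_i <= a * b * s1`_i.
Proof.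
move=> pA1 sA2 pB1 pB2 g1 g2 a0 b0 leA leB.
have [T1 _ [eA1 eB1]] := gen_eigs_simdiag pA1.1 pB1 g1.
have [T2 _ [eA2 eB2]] := gen_eigs_simdiag sA2 pB2 g2.
have [sz1 so1 _] := g1; have [sz2 so2 _] := g2.
have hom : {homo toC : x y / x <= y} by move=> x y; rewrite lecR.
rewrite -lecR !rmorphM /=.
have := @congr_diag_sorted_compare _ n T1 T2 (map toC s1) (map toC s2) (toC a) (toC b) i.
rewrite !row_nth_real_complex !nth_real_complex.
apply; rewrite ?size_map ?lecR ?(homo_sorted hom) //.
- exact/ltW/(gen_eigs_gt0 i pA1 pB1 g1).
- by move=> x; rewrite -eA1 -eA2 hform_real_le ?pA1.1.
- by move=> x; rewrite -eB1 -eB2 hform_real_le ?pB1.1 ?pB2.1.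
- by rewrite -eB2; exact: hform_real_gt0.
Qed.

End RealPencil.

Section Kronecker.
Variable R : comPzRingType.

Lemma tensmxDr m n p q (A : 'M[R]_(m, n)) (B C : 'M[R]_(p, q)) :
  A *t (B + C) = A *t B + A *t C.
Proof. by apply/matrixP => i j; rewrite !mxE mulrDr. Qed.

Lemma tensmxZr m n p q (a : R) (A : 'M[R]_(m, n)) (B : 'M[R]_(p, q)) :
  A *t (a *: B) = a *: (A *t B).
Proof. by apply/matrixP => i j; rewrite !mxE mulrCA. Qed.

Lemma tensmxBr m n p q (A : 'M[R]_(m, n)) (B C : 'M[R]_(p, q)) :
  A *t (B - C) = A *t B - A *t C.
Proof. by rewrite tensmxDr -scaleN1r tensmxZr scaleN1r. Qed.

Lemma tens1mx1 m k : (1%:M : 'M[R]_m) *t (1%:M : 'M[R]_k) = 1%:M.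
Proof.
apply/matrixP => i j.
case: (mxtens_indexP i) => i1 i2; case: (mxtens_indexP j) => j1 j2.
rewrite tensmxE !mxE (inj_eq (can_inj (@mxtens_indexK _ _))) xpair_eqE.
by case: (i1 == j1); case: (i2 == j2); rewrite /= ?mulr1 ?mulr0 ?mul0r.
Qed.

Lemma tens1mx_gram m p k (Y : 'M[R]_(p, k)) :
  (1%:M : 'M[R]_m) *t (Y^T *m Y) = (1%:M *t Y)^T *m (1%:M *t Y).
Proof. by rewrite trmx_tens trmx1 tensmx_mul mul1mx. Qed.

End Kronecker.

Section MassMatrices.
Variable R : realFieldType.

Definition allones k : 'M[R]_k := const_mx 1 *m (const_mx 1 : 'cV[R]_k)^T.

Lemma allones_sym k : (allones k)^T = allones k.
Proof. by rewrite /allones trmx_mul trmxK. Qed.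

Lemma allones_sqr k : allones k *m allones k = k%:R *: allones k.
Proof.
have ee : (const_mx 1 : 'cV[R]_k)^T *m const_mx 1 = k%:R%:M.
  apply/matrixP => i j; rewrite !mxE (ord1 i) (ord1 j) /=.
  under eq_bigr do rewrite !mxE mulr1.
  by rewrite sumr_const card_ord.
by rewrite /allones mulmxA -[X in X *m _]mulmxA ee mul_mx_scalar scalemxAl.
Qed.

Lemma sub_allones_gram k : (0 < k)%N ->
  k%:R *: 1%:M - allones k =
  k%:R *: ((1%:M - k%:R^-1 *: allones k)^T *m (1%:M - k%:R^-1 *: allones k)).
Proof.
move=> k0; have kR : k%:R != 0 :> R by rewrite pnatr_eq0 -lt0n.
set Q := 1%:M - _.
have QT : Q^T = Q by rewrite /Q linearB /= trmx1 linearZ /= allones_sym.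
have QQ : Q *m Q = Q.
  rewrite /Q mulmxBl mulmxBr mulmx1 mul1mx mulmxBr mulmx1 -scalemxAr -scalemxAl.
  by rewrite allones_sqr !scalerA; apply/matrixP => i j; rewrite !mxE; field.
by rewrite QT QQ /Q scalerBr scalerA mulfV // scale1r.
Qed.

Lemma qform_tens1mx_gram_ge0 m p k (Y : 'M[R]_(p, k)) (z : 'cV[R]_(m * k)) :
  0 <= qform z (1%:M *t (Y^T *m Y)).
Proof. by rewrite tens1mx_gram qform_gram_ge0. Qed.

Lemma Mloc_scalar (me : R) : Mloc me = (me / 8) *: 1%:M.
Proof. by rewrite /Mloc tensmxZr tens1mx1. Qed.

Lemma Eloc_decomp (beta me : R) :
  Eloc beta me = (beta * me / 56) *: (8 *: 1%:M - 1%:M *t allones 8).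
Proof. by rewrite /Eloc tensmxZr tensmxBr tensmxZr tens1mx1. Qed.

Lemma qform_Eloc_bounds (beta me : R) z : 0 <= beta -> 0 < me ->
  0 <= qform z (Eloc beta me) <= 8 / 7 * beta * qform z (Mloc me).
Proof.
move=> b0 m0; have c0 : 0 <= beta * me / 56 by rewrite divr_ge0 // mulr_ge0 // ltW.
rewrite Eloc_decomp Mloc_scalar !qformZ qformB qformZ.
have J0 : 0 <= qform z (1%:M *t allones 8).
  by have := qform_tens1mx_gram_ge0 (const_mx 1 : 'cV[R]_8)^T z; rewrite trmxK.
have JI : qform z (1%:M *t allones 8) <= 8 * qform z 1%:M.
  rewrite -subr_ge0 -qformZ -qformB -[8]/(8%:R) -tens1mx1 -tensmxZr -tensmxBr.
  by rewrite sub_allones_gram // tensmxZr qformZ mulr_ge0 ?qform_tens1mx_gram_ge0.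
apply/andP; split; first by rewrite mulr_ge0 // subr_ge0.
have -> : 8 / 7 * beta * (me / 8 * qform z 1%:M) = beta * me / 56 * (8 * qform z 1%:M).
  by field.
by rewrite ler_wpM2l // lerBlDr lerDl.
Qed.

Lemma Mloc_sym (me : R) : (Mloc me)^T = Mloc me.
Proof. by rewrite Mloc_scalar linearZ /= trmx1. Qed.

Lemma Eloc_sym (beta me : R) : (Eloc beta me)^T = Eloc beta me.
Proof.
by rewrite Eloc_decomp linearZ /= linearB /= linearZ /= trmx_tens !trmx1 allones_sym.
Qed.

Lemma qform_modified_mass_bounds (beta me : R) z : 0 <= beta -> 0 < me ->
  qform z (Mloc me) <= 1 * qform z (Mloc me + Eloc beta me) /\
  qform z (Mloc me + Eloc beta me) <= (1 + 8 / 7 * beta) * qform z (Mloc me).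
Proof.
move=> b0 m0; have /andP [E0 E1] := qform_Eloc_bounds z b0 m0.
by rewrite qformD mul1r mulrDl mul1r lerDl lerD2l.
Qed.

End MassMatrices.

Section EigenvalueRatios.
Variable R : rcfType.

Lemma sqrt_ratio_bounds (a b c : R) : 0 < b -> b <= a -> a <= c * b ->
  1 <= Num.sqrt a / Num.sqrt b /\ Num.sqrt a / Num.sqrt b <= Num.sqrt c.
Proof.
move=> b0 ba abc; have sb : 0 < Num.sqrt b by rewrite sqrtr_gt0.
have a0 : 0 <= a := le_trans (ltW b0) ba.
have c0 : 0 <= c by rewrite -(pmulr_lge0 _ b0) (le_trans a0).
by rewrite ler_pdivlMr // mul1r ler_pdivrMr // -sqrtrM // !ler_sqrt // mulr_ge0 // ltW.
Qed.

Lemma kappa_of_ratio_le n (s t : seq R) (c : R) :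
  size s = n -> size t = n -> 0 <= c -> (forall i : 'I_n, 0 < s`_i) ->
  (forall i : 'I_n, s`_i <= t`_i <= c * s`_i) ->
  kappa_of t / kappa_of s <= c.
Proof.
move=> sz_s sz_t c0 s_gt0 st; rewrite /kappa_of sz_s sz_t.
case: n => [|n] in sz_s sz_t s_gt0 st *.
  by rewrite !nth_default ?sz_s ?sz_t // !mul0r.
have /andP [stl tl] := st ord_max; have /andP [st0 _] := st ord0.
have sl := s_gt0 ord_max; have s0 := s_gt0 ord0; rewrite /= in stl tl st0 sl s0.
have t0 := lt_le_trans s0 st0; have tl0 := lt_le_trans sl stl.
have -> : t`_n / t`_0 / (s`_n / s`_0) = (t`_n / s`_n) * (s`_0 / t`_0).
  by field; rewrite !gt_eqF.
rewrite -[c]mulr1; apply: ler_pM.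
- by rewrite divr_ge0 // ltW.
- by rewrite divr_ge0 // ltW.
- by rewrite ler_pdivrMr.
- by rewrite ler_pdivrMr // mul1r.
Qed.

End EigenvalueRatios.

Unset Implicit Arguments.

Theorem mainTheorem6 (R : rcfType) (n N : nat)
  (idx : 'I_N -> 'I_(3 * 8) -> 'I_n)
  (Ke : 'I_N -> 'M[R]_(3 * 8)) (me : 'I_N -> R) (beta : R)
  (sKM sKMb sM sMb : seq R) :
  (forall e, injective (idx e)) ->
  (forall j : 'I_n, exists e, exists a, idx e a = j) ->
  (forall e, is_psd (Ke e)) ->
  is_spd (assemble idx Ke) ->
  (forall e, 0 < me e) ->
  0 <= beta ->
  let K := assemble idx Ke in
  let M := assemble idx (fun e => Mloc (me e)) in
  let Mb := assemble idx (fun e => Mloc (me e) + Eloc beta (me e)) in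
  gen_eigs K M sKM ->
  gen_eigs K Mb sKMb ->
  eigs M sM ->
  eigs Mb sMb ->
  (forall i : 'I_n,
     1 <= Num.sqrt sKM`_i / Num.sqrt sKMb`_i /\
     Num.sqrt sKM`_i / Num.sqrt sKMb`_i <= Num.sqrt (1 + 8 / 7 * beta)) /\
  kappa_of sMb / kappa_of sM <= 1 + 8 / 7 * beta.
Proof.
move=> _ cover _ spdK me0 b0 K M Mb gKM gKMb gM gMb.
set c := 1 + 8 / 7 * beta.
have c0 : 0 <= c by rewrite addr_ge0 // mulr_ge0 // divr_ge0.
have mass e z := qform_modified_mass_bounds z b0 (me0 e).
have le_M_Mb := assemble_qform_le idx (fun e z => (mass e z).1).
have le_Mb_M := assemble_qform_le idx (fun e z => (mass e z).2).
have spdM : is_spd M.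
  apply: (assemble_scalar_spd (fun e => Mloc_scalar (me e))) cover => e.
  by rewrite divr_gt0.
have symMb : Mb^T = Mb by apply: assemble_sym => e; rewrite linearD /= Mloc_sym Eloc_sym.
have spdMb : is_spd Mb by apply: spd_qform_ge spdM symMb _ => y; rewrite -[qform y Mb]mul1r.
have le_K y : qform y K <= 1 * qform y K by rewrite mul1r.
have le_1 y : qform y (1%:M : 'M[R]_n) <= 1 * qform y 1%:M by rewrite mul1r.
split=> [i|].
  have := gen_eigs_compare i spdK spdK.1 spdMb spdM gKMb gKM ler01 c0 le_K le_Mb_M.
  have := gen_eigs_compare i spdK spdK.1 spdM spdMb gKM gKMb ler01 ler01 le_K le_M_Mb.
  rewrite !mul1r; exact: sqrt_ratio_bounds (gen_eigs_gt0 i spdK spdMb gKMb).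
have [szM _ _] := gM; have [szMb _ _] := gMb.
have spd1n := spd1 R n.
apply: (kappa_of_ratio_le szM szMb c0) => [i|i].
  exact: gen_eigs_gt0 spdM spd1n gM.
have := gen_eigs_compare i spdMb spdM.1 spd1n spd1n gMb gM ler01 ler01 le_M_Mb le_1.
have := gen_eigs_compare i spdM symMb spd1n spd1n gM gMb c0 ler01 le_Mb_M le_1.
by rewrite !mul1r mulr1 => -> ->.
Qed.
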